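(* Let $a>0$, $b>0$, $c>0$ and suppose that $$\Phi(x)={}_1F_2\left(a\,;b,c\,;-\frac{x^2}{4}\right)\ge 0\quad\text{for all } x\in\mathbb{R}.$$ Then for any $\gamma,\delta,\epsilon$ with $0\le\gamma<a$, $\delta\ge0$, $\epsilon\ge0$, not all three equal to zero, we have $(a-\gamma,\,b+\delta,\,c+\epsilon)\in\mathcal{P}_{1,2}$.
   Context: For $a,b,c>0$, ${}_1F_2\left(a\,;b,c\,;-\frac{x^2}{4}\right)=\sum_{k=0}^\infty \frac{(a)_k}{k!\,(b)_k(c)_k}\left(-\frac{x^2}{4}\right)^k$, where $(\alpha)_k=\Gamma(\alpha+k)/\Gamma(\alpha)$. $\mathcal{P}_{1,2}$ denotes the set of all triples $(a,b,c)$ of positive reals such that ${}_1F_2\left(a\,;b,c\,;-\frac{x^2}{4}\right)>0$ for all $x>0$. *)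

From Stdlib Require Import Reals Arith Factorial.
From Coquelicot Require Import Coquelicot.
Open Scope R_scope.

Fixpoint poch (a : R) (k : nat) : R :=
  match k with
  | O => 1
  | S k' => poch a k' * (a + INR k')
  end.

Definition F12_term (a b c z : R) (k : nat) : R :=
  poch a k / (INR (Factorial.fact k) * poch b k * poch c k) * z ^ k.

(* 1F2(a; b, c; z) as the sum of its (everywhere absolutely convergent for
   b,c > 0) power series. *)
Definition F12 (a b c z : R) : R := Series (F12_term a b c z).

Definition P12 (a b c : R) : Prop :=
  0 < a /\ 0 < b /\ 0 < c /\
  forall x : R, 0 < x -> 0 < F12 a b c (- x ^ 2 / 4).

(* For 0 < p < P, the multiplier (p)_k/(P)_k = B(p+k, P-p)/B(p, P-p) is the k-th moment of the
   normalised Beta weight t^(p-1) (1-t)^(P-p-1) on (0,1). Multiplying the coefficients of an entire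
   series F by it thus gives the Beta average of t |-> F(z t), which is positive for z < 0 when
   F >= 0 on (-oo, 0] and F(0) > 0, because F(z t) >= F(0)/2 for small t. The triple
   (a-g, b+d, c+e) arises from (a, b, c) through the multipliers (a-g)_k/(a)_k, (b)_k/(b+d)_k and
   (c)_k/(c+e)_k, at least one of them nontrivial.
   To avoid improper integrals we integrate over [eps, 1-eps] only. Integration by parts shows that
   the truncated moments J_k obey the recurrence (k+p) J_k = (k+P) J_(k+1) of (p)_k/(P)_k up to
   boundary terms O(eps^p + eps^(P-p)), so J_k = (p)_k/(P)_k J_0 + O(k (eps^p + eps^(P-p))); the
   factor k is absorbed by evaluating the majorant series at 2z. *)

From Stdlib Require Import Reals Lra Lia Factorial.
From Coquelicot Require Import Coquelicot.
Open Scope R_scope.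

Lemma poch_pos x k : 0 < x -> 0 < poch x k.
Proof.
  intros Hx. induction k as [|k IH]; simpl; [lra|].
  pose proof (pos_INR k). apply Rmult_lt_0_compat; lra.
Qed.

Definition poch_ratio (p P : R) (k : nat) : R := poch p k / poch P k.

Lemma poch_ratio_0 p P : poch_ratio p P 0 = 1.
Proof. unfold poch_ratio; simpl; field. Qed.

Lemma poch_ratio_S p P k : 0 < p -> 0 < P ->
  poch_ratio p P (S k) = poch_ratio p P k * ((INR k + p) / (INR k + P)).
Proof.
  intros Hp HP. unfold poch_ratio; simpl.
  pose proof (poch_pos p k Hp). pose proof (poch_pos P k HP). pose proof (pos_INR k).
  field. lra.
Qed.

Lemma poch_ratio_diag p k : 0 < p -> poch_ratio p p k = 1.
Proof. intros Hp. unfold poch_ratio. pose proof (poch_pos p k Hp). field. lra. Qed.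

Lemma poch_ratio_bound p P k : 0 < p <= P -> 0 < poch_ratio p P k <= 1.
Proof.
  intros Hp. induction k as [|k IH]; [rewrite poch_ratio_0; lra|].
  rewrite poch_ratio_S by lra. pose proof (pos_INR k).
  assert (0 < (INR k + p) / (INR k + P) <= 1).
  { split; [apply Rdiv_lt_0_compat; lra|].
    apply (Rdiv_le_1 (INR k + p) (INR k + P)); lra. }
  split; [apply Rmult_lt_0_compat|]; nra.
Qed.

Lemma exp_le_compat x y : x <= y -> exp x <= exp y.
Proof. intros [H|H]; [left; apply exp_increasing, H|subst; lra]. Qed.

Lemma continuous_ge_half (g : R -> R) x : continuous g x -> 0 < g x ->
  exists eta, 0 < eta /\ forall t, Rabs (t - x) < eta -> g x / 2 <= g t.
Proof.
  intros Hg Hpos.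
  destruct (proj1 (filterlim_locally g (g x)) Hg (mkposreal (g x / 2) ltac:(lra))) as [eta Heta].
  exists eta. split; [apply cond_pos|]. intros t Ht.
  specialize (Heta t Ht). simpl in Heta. unfold ball in Heta; simpl in Heta.
  unfold AbsRing_ball, abs, minus, plus, opp in Heta; simpl in Heta.
  apply Rabs_def2 in Heta. lra.
Qed.

Lemma Series_nonneg (u : nat -> R) : (forall k, 0 <= u k) -> ex_series u -> 0 <= Series u.
Proof.
  intros Hu Hex. replace 0 with (Series (fun _ => 0 * 0)) by (rewrite Series_scal_l; ring).
  apply Series_le; [|exact Hex]. intros k. rewrite Rmult_0_l. split; [lra|apply Hu].
Qed.

Lemma Series_tail_abs_le (u v : nat -> R) n :
  (forall k, Rabs (u k) <= v k) -> ex_series v ->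
  Rabs (Series u - sum_n u n) <= Series v - sum_n v n.
Proof.
  intros Huv Hv.
  assert (Hu : ex_series u) by (apply (ex_series_le u v); auto).
  rewrite (Series_incr_n u (S n)), (Series_incr_n v (S n)) by (auto; lia).
  simpl pred. rewrite !sum_n_Reals.
  replace (sum_f_R0 u n + Series (fun k => u (S n + k)%nat) - sum_f_R0 u n)
    with (Series (fun k => u (S n + k)%nat)) by ring.
  replace (sum_f_R0 v n + Series (fun k => v (S n + k)%nat) - sum_f_R0 v n)
    with (Series (fun k => v (S n + k)%nat)) by ring.
  assert (Hvt : ex_series (fun k => v (S n + k)%nat)) by (apply ex_series_incr_n; auto).
  eapply Rle_trans; [apply Series_Rabs|].
  - apply (@ex_series_le R_AbsRing R_CompleteNormedModule _ (fun k => v (S n + k)%nat)); auto.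
    intros k. unfold norm; simpl; unfold abs; simpl. rewrite Rabs_Rabsolu. apply Huv.
  - apply Series_le; auto. intros k; split; [apply Rabs_pos|apply Huv].
Qed.

Lemma INR_le_pow2 k : INR k <= 2 ^ k.
Proof.
  left. replace 2 with (INR 2) by (simpl; ring). rewrite <- pow_INR.
  apply lt_INR, Nat.pow_gt_lin_r. lia.
Qed.

Definition entire (f : nat -> R) : Prop := CV_radius f = p_infty.

Lemma CV_radius_le_abs (a b : nat -> R) :
  (forall n, Rabs (b n) <= Rabs (a n)) -> Rbar_le (CV_radius a) (CV_radius b).
Proof.
  intros Hba. destruct (CV_radius_bounded a) as [_ Hlub].
  apply Hlub. intros r [M HM].
  apply (proj1 (CV_radius_bounded b)). exists M. intros n.
  eapply Rle_trans; [|apply (HM n)].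
  rewrite !Rabs_mult. apply Rmult_le_compat_r; [apply Rabs_pos|apply Hba].
Qed.

Lemma entire_abs_le (a b : nat -> R) :
  (forall n, Rabs (b n) <= Rabs (a n)) -> entire a -> entire b.
Proof.
  intros Hba Ha. pose proof (CV_radius_le_abs a b Hba) as H.
  unfold entire in *. rewrite Ha in H. destruct (CV_radius b); simpl in H; easy.
Qed.

Lemma entire_poch_ratio f p P : 0 < p <= P -> entire f ->
  entire (fun k => f k * poch_ratio p P k).
Proof.
  intros Hp. apply entire_abs_le. intros k.
  pose proof (poch_ratio_bound p P k Hp).
  rewrite Rabs_mult, (Rabs_right (poch_ratio p P k)) by lra.
  pose proof (Rabs_pos (f k)). nra.
Qed.

Lemma entire_ex_series_abs f x : entire f -> ex_series (fun k => Rabs (f k * x ^ k)).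
Proof. intros Hf. apply CV_disk_inside. rewrite Hf. easy. Qed.

Lemma entire_of_ratio_le (a : nat -> R) (M : R) :
  (forall n, a n <> 0) -> (forall n, Rabs (a (S n) / a n) <= M / INR (S n)) -> entire a.
Proof.
  intros Ha HM. apply CV_radius_infinite_DAlembert; [exact Ha|].
  apply (is_lim_seq_le_le (fun _ => 0) _ (fun n => M / INR (S n))).
  - intros n. split; [apply Rabs_pos|apply HM].
  - apply is_lim_seq_const.
  - replace (Finite 0) with (Rbar_mult M 0) by (simpl; f_equal; ring).
    apply is_lim_seq_scal_l.
    replace (Finite 0) with (Rbar_inv p_infty) by reflexivity.
    apply is_lim_seq_inv; [|easy].
    apply (is_lim_seq_incr_1 INR). apply is_lim_seq_INR.
Qed.

Lemma PSeries_scaled_continuous f z t : entire f -> continuous (fun s => PSeries f (z * s)) t.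
Proof.
  intros Hf. apply (@ex_derive_continuous R_AbsRing R_NormedModule).
  auto_derive. apply ex_derive_PSeries. rewrite Hf. easy.
Qed.

Section WeightedIntegral.

Variables (w : R -> R) (a b : R).
Hypotheses (a_nonneg : 0 <= a) (a_le_b : a <= b) (b_le_1 : b <= 1).
Hypothesis w_nonneg : forall t, a <= t <= b -> 0 <= w t.
Hypothesis w_cont : forall t, a <= t <= b -> continuous w t.

Definition moment (k : nat) : R := RInt (fun t => t ^ k * w t) a b.

Lemma ex_RInt_weight_continuous (g : R -> R) :
  (forall t, a <= t <= b -> continuous g t) -> ex_RInt (fun t => g t * w t) a b.
Proof.
  intros Hg. apply (ex_RInt_continuous (V := R_CompleteNormedModule)). intros t Ht.
  rewrite Rmin_left, Rmax_right in Ht by lra.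
  apply (continuous_mult g w); auto.
Qed.

Lemma is_RInt_moment k : is_RInt (fun t => t ^ k * w t) a b (moment k).
Proof.
  apply (RInt_correct (V := R_CompleteNormedModule)), ex_RInt_weight_continuous. intros t _.
  apply (@ex_derive_continuous R_AbsRing R_NormedModule). auto_derive. easy.
Qed.

Lemma moment_nonneg k : 0 <= moment k.
Proof.
  apply RInt_ge_0; [lra|eexists; apply is_RInt_moment|]. intros t Ht.
  apply Rmult_le_pos; [apply pow_le|apply w_nonneg]; lra.
Qed.

Lemma is_RInt_partial_sum f z n :
  is_RInt (fun t => sum_n (fun k => f k * (z * t) ^ k) n * w t) a b
    (sum_n (fun k => f k * z ^ k * moment k) n).
Proof.
  induction n as [|n IH].
  - rewrite sum_O.
    change (is_RInt (fun t => sum_n (fun k => f k * (z * t) ^ k) 0 * w t) a b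
              (scal (f 0%nat * z ^ 0) (moment 0))).
    eapply (is_RInt_ext (V := R_NormedModule));
      [|apply (is_RInt_scal (V := R_NormedModule)), is_RInt_moment].
    intros t _. rewrite sum_O. unfold scal; simpl; unfold mult; simpl. ring.
  - rewrite sum_Sn.
    change (is_RInt (fun t => sum_n (fun k => f k * (z * t) ^ k) (S n) * w t) a b
              (plus (sum_n (fun k => f k * z ^ k * moment k) n)
                    (scal (f (S n) * z ^ S n) (moment (S n))))).
    eapply (is_RInt_ext (V := R_NormedModule));
      [|apply (is_RInt_plus (V := R_NormedModule));
        [apply IH|apply (is_RInt_scal (V := R_NormedModule)), is_RInt_moment]].
    intros t _. rewrite sum_Sn. unfold scal, plus; simpl; unfold mult, plus; simpl.
    rewrite Rpow_mult_distr. ring.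
Qed.

Lemma is_series_moment_PSeries f z : entire f ->
  is_series (fun k => f k * z ^ k * moment k)
    (RInt (fun t => PSeries f (z * t) * w t) a b).
Proof.
  intros Hf.
  set (I := RInt (fun t => PSeries f (z * t) * w t) a b).
  set (S := fun n => sum_n (fun k => f k * z ^ k * moment k) n).
  set (v := fun k => Rabs (f k * Rabs z ^ k)).
  set (tail := fun n => Series v - sum_n v n).
  assert (Hv : ex_series v) by apply entire_ex_series_abs, Hf.
  assert (Htail : forall n t, a <= t <= b ->
            Rabs (PSeries f (z * t) - sum_n (fun k => f k * (z * t) ^ k) n) <= tail n).
  { intros n t Ht. apply Series_tail_abs_le; auto. intros k. unfold v.
    rewrite !Rabs_mult, <- !RPow_abs, Rabs_Rabsolu, Rabs_mult, (Rabs_right t) by lra.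
    apply Rmult_le_compat_l; [apply Rabs_pos|]. apply pow_incr.
    pose proof (Rabs_pos z). split; nra. }
  assert (Herr : forall n, Rabs (S n - I) <= tail n * moment 0).
  { intros n. rewrite Rabs_minus_sym.
    apply (norm_RInt_le
             (fun t => PSeries f (z * t) * w t - sum_n (fun k => f k * (z * t) ^ k) n * w t)
             (fun t => tail n * (t ^ 0 * w t)) a b); [lra| | |].
    - intros t Ht. unfold norm; simpl; unfold abs; simpl.
      rewrite <- Rmult_minus_distr_r, Rabs_mult, (Rabs_right (w t))
        by (apply Rle_ge, w_nonneg, Ht).
      rewrite Rmult_1_l. apply Rmult_le_compat_r; [apply w_nonneg, Ht|apply Htail, Ht].
    - apply (is_RInt_minus (V := R_NormedModule)); [|apply is_RInt_partial_sum].
      apply (RInt_correct (V := R_CompleteNormedModule)), ex_RInt_weight_continuous.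
      intros t _. apply PSeries_scaled_continuous, Hf.
    - apply (is_RInt_scal (V := R_NormedModule)), is_RInt_moment. }
  assert (Htail0 : is_lim_seq (fun n => tail n * moment 0) 0).
  { replace (Finite 0) with (Rbar_mult (Rbar_minus (Series v) (Series v)) (moment 0))
      by (simpl; f_equal; ring).
    apply is_lim_seq_scal_r, is_lim_seq_minus'; [apply is_lim_seq_const|apply Series_correct, Hv]. }
  change (is_lim_seq S I).
  apply (is_lim_seq_le_le (fun n => I - tail n * moment 0) _ (fun n => I + tail n * moment 0)).
  - intros n. pose proof (Herr n) as Hn. apply Rabs_le_between in Hn. lra.
  - pose proof (is_lim_seq_minus' _ _ _ _ (is_lim_seq_const I) Htail0) as H.
    rewrite Rminus_0_r in H. exact H.
  - pose proof (is_lim_seq_plus' _ _ _ _ (is_lim_seq_const I) Htail0) as H.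
    rewrite Rplus_0_r in H. exact H.
Qed.

End WeightedIntegral.

Definition beta_weight (p q t : R) : R := Rpower t (p - 1) * Rpower (1 - t) (q - 1).

Lemma beta_weight_pos p q t : 0 < beta_weight p q t.
Proof. apply Rmult_lt_0_compat; apply exp_pos. Qed.

Lemma beta_weight_continuous p q t : 0 < t < 1 -> continuous (beta_weight p q) t.
Proof.
  intros Ht. apply (@ex_derive_continuous R_AbsRing R_NormedModule).
  unfold beta_weight, Rpower. auto_derive. lra.
Qed.

Definition beta_moment (p q eps : R) (k : nat) : R :=
  moment (beta_weight p q) eps (1 - eps) k.

Lemma beta_moment_nonneg p q eps k : 0 < eps < 1/2 -> 0 <= beta_moment p q eps k.
Proof.
  intros He. apply moment_nonneg; try lra.
  - intros t _. left; apply beta_weight_pos.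
  - intros t Ht. apply beta_weight_continuous. lra.
Qed.

Definition beta_boundary (p q : R) (k : nat) (t : R) : R :=
  t ^ S k * (1 - t) * beta_weight p q t.

Lemma is_derive_beta_boundary p q k t : 0 < t < 1 ->
  is_derive (beta_boundary p q k) t
    ((INR k + p) * (t ^ k * beta_weight p q t) - (INR k + p + q) * (t ^ S k * beta_weight p q t)).
Proof.
  intros Ht. unfold beta_boundary, beta_weight, Rpower. auto_derive; [lra|].
  replace (match k with 0%nat => 1 | S _ => INR k + 1 end) with (INR k + 1)
    by (destruct k; simpl; lra).
  replace (1 + - t) with (1 - t) by ring. simpl. field. lra.
Qed.

Lemma beta_boundary_bound p q k t : 0 <= p -> 0 <= q -> 0 < t < 1 ->
  0 < beta_boundary p q k t /\
  beta_boundary p q k t <= Rpower t p /\ beta_boundary p q k t <= Rpower (1 - t) q.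
Proof.
  intros Hp Hq Ht.
  assert (E : beta_boundary p q k t = exp ((INR k + p) * ln t + q * ln (1 - t))).
  { unfold beta_boundary, beta_weight, Rpower.
    rewrite <- (Rpower_pow (S k) t), <- (exp_ln (1 - t)) at 1 by lra. unfold Rpower.
    rewrite <- !exp_plus. f_equal. rewrite S_INR. ring. }
  assert (ln t < 0) by (rewrite <- ln_1; apply ln_increasing; lra).
  assert (ln (1 - t) < 0) by (rewrite <- ln_1; apply ln_increasing; lra).
  pose proof (pos_INR k).
  rewrite E. unfold Rpower. repeat split; [apply exp_pos| |]; apply exp_le_compat; nra.
Qed.

Lemma beta_moment_rec p q eps k : 0 < eps < 1/2 ->
  (INR k + p) * beta_moment p q eps k - (INR k + p + q) * beta_moment p q eps (S k)
  = beta_boundary p q k (1 - eps) - beta_boundary p q k eps.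
Proof.
  intros He.
  set (df := fun t => (INR k + p) * (t ^ k * beta_weight p q t)
                      - (INR k + p + q) * (t ^ S k * beta_weight p q t)).
  assert (H1 : is_RInt df eps (1 - eps)
                 (minus (beta_boundary p q k (1 - eps)) (beta_boundary p q k eps))).
  { apply (is_RInt_derive (V := R_CompleteNormedModule)); intros t Ht;
      rewrite Rmin_left, Rmax_right in Ht by lra.
    - apply is_derive_beta_boundary. lra.
    - apply (@ex_derive_continuous R_AbsRing R_NormedModule).
      unfold df, beta_weight, Rpower. auto_derive. lra. }
  assert (H2 : is_RInt df eps (1 - eps)
                 (minus (scal (INR k + p) (beta_moment p q eps k))
                        (scal (INR k + p + q) (beta_moment p q eps (S k))))).
  { apply (is_RInt_minus (V := R_NormedModule)); apply (is_RInt_scal (V := R_NormedModule));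
      apply is_RInt_moment; try lra; intros t Ht; apply beta_weight_continuous; lra. }
  apply (is_RInt_unique (V := R_CompleteNormedModule)) in H1, H2.
  rewrite H1 in H2. unfold minus, plus, opp, scal in H2; simpl in H2.
  unfold mult in H2; simpl in H2. lra.
Qed.

Lemma beta_moment_poch_ratio_error p q eps k : 0 < p -> 0 < q -> 0 < eps < 1/2 ->
  (p + q) * Rabs (beta_moment p q eps k - poch_ratio p (p + q) k * beta_moment p q eps 0)
  <= INR k * (Rpower eps p + Rpower eps q).
Proof.
  intros Hp Hq He. set (beta := Rpower eps p + Rpower eps q).
  induction k as [|k IH].
  - rewrite poch_ratio_0, Rmult_1_l, Rminus_diag, Rabs_R0. simpl. lra.
  - set (D := fun j => beta_moment p q eps j - poch_ratio p (p + q) j * beta_moment p q eps 0).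
    fold (D k) in IH. fold (D (S k)).
    set (b := beta_boundary p q k (1 - eps) - beta_boundary p q k eps).
    assert (Hb : Rabs b <= beta).
    { pose proof (beta_boundary_bound p q k eps ltac:(lra) ltac:(lra) ltac:(lra)).
      pose proof (beta_boundary_bound p q k (1 - eps) ltac:(lra) ltac:(lra) ltac:(lra)).
      replace (1 - (1 - eps)) with eps in * by ring.
      apply Rabs_le. unfold b, beta. lra. }
    pose proof (pos_INR k).
    assert (HD : D (S k) * (INR k + p + q) = (INR k + p) * D k - b).
    { unfold D, b. rewrite <- beta_moment_rec by lra. rewrite poch_ratio_S by lra. field. lra. }
    assert (HDabs : Rabs (D (S k)) * (INR k + p + q) <= (INR k + p) * Rabs (D k) + beta).
    { rewrite <- (Rabs_right (INR k + p + q)), <- Rabs_mult, HD by lra.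
      eapply Rle_trans; [apply Rabs_triang|].
      rewrite Rabs_Ropp, Rabs_mult, (Rabs_right (INR k + p)) by lra. lra. }
    apply Rmult_le_reg_r with (INR k + p + q); [lra|]. rewrite S_INR.
    assert (0 <= beta) by (apply Rplus_le_le_0_compat; left; apply exp_pos).
    assert (0 <= Rabs (D (S k))) by apply Rabs_pos.
    assert (A1 := Rmult_le_compat_l (p + q) _ _ ltac:(lra) HDabs).
    assert (A2 := Rmult_le_compat_l (INR k + p) _ _ ltac:(lra) IH).
    assert (A3 : 0 <= beta * INR k * (q + 1)) by (apply Rmult_le_pos; [apply Rmult_le_pos|]; lra).
    lra.
Qed.

Lemma beta_moment_poch_ratio_error_pow2 p q eps k : 0 < p -> 0 < q -> 0 < eps < 1/2 ->
  Rabs (beta_moment p q eps k - poch_ratio p (p + q) k * beta_moment p q eps 0)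
  <= 2 ^ k * ((Rpower eps p + Rpower eps q) / (p + q)).
Proof.
  intros Hp Hq He. apply Rmult_le_reg_l with (p + q); [lra|].
  replace ((p + q) * (2 ^ k * ((Rpower eps p + Rpower eps q) / (p + q))))
    with (2 ^ k * (Rpower eps p + Rpower eps q)) by (field; lra).
  eapply Rle_trans; [apply beta_moment_poch_ratio_error; assumption|].
  apply Rmult_le_compat_r; [apply Rplus_le_le_0_compat; left; apply exp_pos|apply INR_le_pow2].
Qed.

Definition admissible (f : nat -> R) : Prop :=
  entire f /\ 0 < f 0%nat /\ forall u, u <= 0 -> 0 <= PSeries f u.

Lemma RInt_PSeries_beta_lower_bound f p q z : admissible f -> z <= 0 ->
  exists eta L, 0 < eta <= 1/2 /\ 0 < L /\
    forall eps, 0 < eps <= eta / 2 ->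
      L <= RInt (fun t => PSeries f (z * t) * beta_weight p q t) eps (1 - eps).
Proof.
  intros [Hf [Hf0 Hnn]] Hz.
  set (G := fun t => PSeries f (z * t) * beta_weight p q t).
  destruct (continuous_ge_half (fun t => PSeries f (z * t)) 0 (PSeries_scaled_continuous f z 0 Hf))
    as [eta0 [Heta0 Hnear]]; [rewrite Rmult_0_r, PSeries_0; exact Hf0|].
  rewrite Rmult_0_r, PSeries_0 in Hnear.
  set (eta := Rmin (1/2) (eta0 / 2)).
  assert (Heta : 0 < eta <= 1/2) by (split; [apply Rmin_glb_lt|apply Rmin_l]; lra).
  assert (Heta_le : eta <= eta0 / 2) by apply Rmin_r.
  assert (HexG : forall x y, 0 < x <= y -> y < 1 -> ex_RInt G x y).
  { intros x y Hx Hy. apply ex_RInt_weight_continuous; [lra| |].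
    - intros t Ht. apply beta_weight_continuous. lra.
    - intros t _. apply PSeries_scaled_continuous, Hf. }
  assert (HG : forall t, 0 < t < 1 -> 0 <= G t).
  { intros t Ht. apply Rmult_le_pos; [apply Hnn; nra|left; apply beta_weight_pos]. }
  exists eta, (RInt (fun t => f 0%nat / 2 * beta_weight p q t) (eta / 2) eta).
  split; [exact Heta|split].
  - apply RInt_gt_0; [lra| |].
    + intros t _. apply Rmult_lt_0_compat; [lra|apply beta_weight_pos].
    + intros t Ht. apply (continuous_mult (fun _ => f 0%nat / 2) (beta_weight p q)).
      * apply continuous_const.
      * apply beta_weight_continuous. lra.
  - intros eps Heps.
    rewrite <- (RInt_Chasles G eps (eta / 2) (1 - eps)), <- (RInt_Chasles G (eta / 2) eta (1 - eps))
      by (apply HexG; lra).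
    assert (0 <= RInt G eps (eta / 2))
      by (apply RInt_ge_0; [lra|apply HexG; lra|intros; apply HG; lra]).
    assert (0 <= RInt G eta (1 - eps))
      by (apply RInt_ge_0; [lra|apply HexG; lra|intros; apply HG; lra]).
    assert (RInt (fun t => f 0%nat / 2 * beta_weight p q t) (eta / 2) eta <= RInt G (eta / 2) eta).
    { apply RInt_le; [lra| |apply HexG; lra|].
      - apply ex_RInt_weight_continuous; [lra| |].
        + intros t Ht. apply beta_weight_continuous. lra.
        + intros t _. apply continuous_const.
      - intros t Ht. apply Rmult_le_compat_r; [left; apply beta_weight_pos|].
        apply Hnear. rewrite Rminus_0_r, Rabs_right; lra. }
    unfold plus; simpl. lra.
Qed.

Lemma RInt_PSeries_beta_approx f p q z eps : entire f -> 0 < p -> 0 < q -> 0 < eps < 1/2 ->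
  (p + q) * Rabs (RInt (fun t => PSeries f (z * t) * beta_weight p q t) eps (1 - eps)
                  - PSeries (fun k => f k * poch_ratio p (p + q) k) z * beta_moment p q eps 0)
  <= Series (fun k => Rabs (f k * (2 * z) ^ k)) * (Rpower eps p + Rpower eps q).
Proof.
  intros Hf Hp Hq He.
  set (beta := Rpower eps p + Rpower eps q).
  set (J := beta_moment p q eps).
  set (E := fun k => f k * z ^ k * (J k - poch_ratio p (p + q) k * J 0%nat)).
  set (dom := fun k => Rabs (f k * (2 * z) ^ k) * (beta / (p + q))).
  assert (HE : forall k, Rabs (E k) <= dom k).
  { intros k. unfold E, dom.
    rewrite Rpow_mult_distr, !Rabs_mult, (Rabs_right (2 ^ k)) by (left; apply pow_lt; lra).
    replace (Rabs (f k) * (2 ^ k * Rabs (z ^ k)) * (beta / (p + q)))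
      with (Rabs (f k) * Rabs (z ^ k) * (2 ^ k * (beta / (p + q)))) by ring.
    apply Rmult_le_compat_l; [apply Rmult_le_pos; apply Rabs_pos|].
    apply beta_moment_poch_ratio_error_pow2; assumption. }
  assert (Hdom : ex_series dom) by apply ex_series_scal_r, entire_ex_series_abs, Hf.
  assert (HexE : ex_series (fun k => Rabs (E k))).
  { apply (@ex_series_le R_AbsRing R_CompleteNormedModule _ dom); [|exact Hdom].
    intros k. unfold norm; simpl; unfold abs; simpl. rewrite Rabs_Rabsolu. apply HE. }
  assert (HI := is_series_moment_PSeries (beta_weight p q) eps (1 - eps)
                  ltac:(lra) ltac:(lra) ltac:(lra)
                  (fun t _ => Rlt_le _ _ (beta_weight_pos p q t))
                  (fun t Ht => beta_weight_continuous p q t ltac:(lra)) f z Hf).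
  assert (Hsplit : RInt (fun t => PSeries f (z * t) * beta_weight p q t) eps (1 - eps)
                   - PSeries (fun k => f k * poch_ratio p (p + q) k) z * J 0%nat = Series E).
  { rewrite <- (is_series_unique _ _ HI). unfold PSeries. rewrite <- Series_scal_r, <- Series_minus.
    - apply Series_ext. intros k. unfold E, J, beta_moment. ring.
    - eexists; exact HI.
    - apply ex_series_scal_r, ex_series_Rabs.
      apply entire_ex_series_abs, entire_poch_ratio; [lra|exact Hf]. }
  rewrite Hsplit.
  apply Rle_trans with ((p + q) * Series dom).
  - apply Rmult_le_compat_l; [lra|]. eapply Rle_trans; [apply Series_Rabs, HexE|].
    apply Series_le; [|exact Hdom]. intros k; split; [apply Rabs_pos|apply HE].
  - unfold dom. rewrite Series_scal_r. right. field. lra.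
Qed.

Lemma exists_Rpower_sum_le p q tau e0 : 0 < p -> 0 < q -> 0 < tau -> 0 < e0 ->
  exists eps, 0 < eps <= e0 /\ Rpower eps p + Rpower eps q <= tau.
Proof.
  intros Hp Hq Htau He0.
  assert (Hroot : forall s, 0 < s -> Rpower (Rpower (tau / 2) (/ s)) s = tau / 2).
  { intros s Hs. rewrite Rpower_mult, Rinv_l, Rpower_1 by lra. reflexivity. }
  set (eps := Rmin e0 (Rmin (Rpower (tau / 2) (/ p)) (Rpower (tau / 2) (/ q)))).
  assert (Heps : 0 < eps) by (repeat apply Rmin_glb_lt; try apply exp_pos; lra).
  assert (Hp' : eps <= Rpower (tau / 2) (/ p)) by (eapply Rle_trans; [apply Rmin_r|apply Rmin_l]).
  assert (Hq' : eps <= Rpower (tau / 2) (/ q)) by (eapply Rle_trans; [apply Rmin_r|apply Rmin_r]).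
  exists eps. split; [split; [exact Heps|apply Rmin_l]|].
  pose proof (Rle_Rpower_l _ _ p ltac:(lra) (conj Heps Hp')) as Hpow_p.
  pose proof (Rle_Rpower_l _ _ q ltac:(lra) (conj Heps Hq')) as Hpow_q.
  rewrite Hroot in Hpow_p, Hpow_q by lra. lra.
Qed.

Lemma PSeries_poch_ratio_pos f p P z : admissible f -> 0 < p < P -> z < 0 ->
  0 < PSeries (fun k => f k * poch_ratio p P k) z.
Proof.
  intros Hadm Hp Hz. pose proof Hadm as [Hf _].
  set (q := P - p). replace P with (p + q) by (unfold q; ring).
  assert (Hq : 0 < q) by (unfold q; lra).
  destruct (RInt_PSeries_beta_lower_bound f p q z Hadm ltac:(lra)) as [eta [L [Heta [HL Hlow]]]].
  set (A := Series (fun k => Rabs (f k * (2 * z) ^ k))).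
  assert (HA : 0 <= A)
    by (apply Series_nonneg; [intros; apply Rabs_pos|apply entire_ex_series_abs, Hf]).
  (* The threshold makes the truncation error of [RInt_PSeries_beta_approx] at most [L / 2]. *)
  destruct (exists_Rpower_sum_le p q (L * (p + q) / (2 * (A + 1))) (eta / 2))
    as [eps [Heps Hsmall]]; [lra|lra|apply Rdiv_lt_0_compat; nra|lra|].
  pose proof (RInt_PSeries_beta_approx f p q z eps Hf ltac:(lra) Hq ltac:(lra)) as Happrox.
  pose proof (Hlow eps Heps) as HI.
  set (I := RInt _ eps (1 - eps)) in Happrox, HI.
  set (Psi := PSeries _ z) in Happrox |- *.
  set (J0 := beta_moment p q eps 0) in Happrox.
  fold A in Happrox.
  assert (HJ0 : 0 <= J0) by (apply beta_moment_nonneg; lra).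
  assert (Herr : Rabs (I - Psi * J0) <= L / 2).
  { apply Rmult_le_reg_l with (p + q); [lra|].
    assert (0 <= Rpower eps p + Rpower eps q) by (apply Rplus_le_le_0_compat; left; apply exp_pos).
    assert (A * (Rpower eps p + Rpower eps q) <= (A + 1) * (L * (p + q) / (2 * (A + 1)))) by nra.
    replace ((A + 1) * (L * (p + q) / (2 * (A + 1)))) with ((p + q) * (L / 2)) in * by (field; lra).
    lra. }
  apply Rabs_le_between in Herr.
  destruct (Rle_or_lt Psi 0) as [Hn|Hpos]; [|exact Hpos].
  assert (Psi * J0 <= 0) by nra. lra.
Qed.

Lemma PSeries_poch_ratio_diag f p u : 0 < p ->
  PSeries (fun k => f k * poch_ratio p p k) u = PSeries f u.
Proof.
  intros Hp. apply Series_ext. intros k. rewrite poch_ratio_diag by exact Hp. ring.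
Qed.

Lemma admissible_poch_ratio f p P : admissible f -> 0 < p <= P ->
  admissible (fun k => f k * poch_ratio p P k).
Proof.
  intros Hadm Hp. pose proof Hadm as [Hf [Hf0 Hnn]]. split; [|split].
  - apply entire_poch_ratio; assumption.
  - rewrite poch_ratio_0, Rmult_1_r. exact Hf0.
  - intros u Hu. destruct (Req_dec p P) as [<-|HpP].
    + rewrite PSeries_poch_ratio_diag by lra. apply Hnn, Hu.
    + destruct Hu as [Hu | ->].
      * left. apply PSeries_poch_ratio_pos; auto; lra.
      * rewrite PSeries_0, poch_ratio_0. lra.
Qed.

Lemma PSeries_poch_ratio_pos_of_pos f p P : admissible f -> 0 < p <= P ->
  (p < P \/ forall z, z < 0 -> 0 < PSeries f z) ->
  forall z, z < 0 -> 0 < PSeries (fun k => f k * poch_ratio p P k) z.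
Proof.
  intros Hadm Hp Hcase z Hz. destruct (Req_dec p P) as [<-|HpP].
  - rewrite PSeries_poch_ratio_diag by lra.
    destruct Hcase as [|Hpos]; [lra|apply Hpos, Hz].
  - apply PSeries_poch_ratio_pos; auto; lra.
Qed.

Definition F12_coef (a b c : R) (k : nat) : R :=
  poch a k / (INR (fact k) * poch b k * poch c k).

Lemma F12_PSeries a b c z : F12 a b c z = PSeries (F12_coef a b c) z.
Proof. reflexivity. Qed.

Lemma F12_coef_S a b c k : 0 < a -> 0 < b -> 0 < c ->
  F12_coef a b c (S k)
  = F12_coef a b c k * ((a + INR k) / (INR (S k) * (b + INR k) * (c + INR k))).
Proof.
  intros Ha Hb Hc. unfold F12_coef. simpl poch. rewrite fact_simpl, mult_INR, S_INR.
  pose proof (pos_INR k). pose proof (INR_fact_lt_0 k).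
  pose proof (poch_pos a k Ha). pose proof (poch_pos b k Hb). pose proof (poch_pos c k Hc).
  field. repeat split; lra.
Qed.

Lemma entire_F12_coef a b c : 0 < a -> 0 < b -> 0 < c -> entire (F12_coef a b c).
Proof.
  intros Ha Hb Hc.
  assert (Hpos : forall k, 0 < F12_coef a b c k).
  { intros k. unfold F12_coef. apply Rdiv_lt_0_compat; [apply poch_pos, Ha|].
    repeat apply Rmult_lt_0_compat; [apply INR_fact_lt_0|apply poch_pos..]; assumption. }
  apply (entire_of_ratio_le _ ((a + b) / (b * c))).
  - intros k. apply Rgt_not_eq, Hpos.
  - intros k. pose proof (Hpos k). pose proof (pos_INR k).
    rewrite F12_coef_S by assumption. rewrite S_INR.
    replace (F12_coef a b c k * ((a + INR k) / ((INR k + 1) * (b + INR k) * (c + INR k)))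
             / F12_coef a b c k)
      with ((a + INR k) / ((INR k + 1) * (b + INR k) * (c + INR k))) by (field; repeat split; lra).
    rewrite Rabs_right by (left; apply Rdiv_lt_0_compat; [|repeat apply Rmult_lt_0_compat]; lra).
    apply Rmult_le_reg_r with ((INR k + 1) * (b + INR k) * (c + INR k) * (b * c));
      [repeat apply Rmult_lt_0_compat; lra|].
    replace ((a + INR k) / ((INR k + 1) * (b + INR k) * (c + INR k))
             * ((INR k + 1) * (b + INR k) * (c + INR k) * (b * c)))
      with ((a + INR k) * (b * c)) by (field; repeat split; lra).
    replace ((a + b) / (b * c) / (INR k + 1) * ((INR k + 1) * (b + INR k) * (c + INR k) * (b * c)))
      with ((a + b) * (b + INR k) * (c + INR k)) by (field; repeat split; lra).
    assert (0 <= a * INR k * (c + INR k) + b * INR k * INR k + a * b * INR k)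
      by (repeat apply Rplus_le_le_0_compat; repeat apply Rmult_le_pos; lra).
    nra.
Qed.

Lemma admissible_F12_coef a b c : 0 < a -> 0 < b -> 0 < c ->
  (forall x, 0 <= F12 a b c (- x ^ 2 / 4)) -> admissible (F12_coef a b c).
Proof.
  intros Ha Hb Hc HPhi. split; [|split].
  - apply entire_F12_coef; assumption.
  - unfold F12_coef. simpl. lra.
  - intros u Hu. rewrite <- F12_PSeries.
    replace u with (- (2 * sqrt (- u)) ^ 2 / 4); [apply HPhi|].
    rewrite Rpow_mult_distr, pow2_sqrt by lra. field.
Qed.

Lemma F12_poch_ratio a b c g d e z : 0 < a - g -> 0 < b -> 0 < c -> 0 <= g -> 0 <= d -> 0 <= e ->
  F12 (a - g) (b + d) (c + e) z
  = PSeries (fun k => F12_coef a b c k * poch_ratio (a - g) a k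
                      * poch_ratio b (b + d) k * poch_ratio c (c + e) k) z.
Proof.
  intros. rewrite F12_PSeries. apply Series_ext. intros k.
  unfold F12_coef, poch_ratio.
  pose proof (INR_fact_lt_0 k).
  pose proof (poch_pos (a - g) k ltac:(lra)). pose proof (poch_pos a k ltac:(lra)).
  pose proof (poch_pos b k ltac:(lra)). pose proof (poch_pos (b + d) k ltac:(lra)).
  pose proof (poch_pos c k ltac:(lra)). pose proof (poch_pos (c + e) k ltac:(lra)).
  field. repeat split; lra.
Qed.

Theorem lemma1 (a b c : R) (ha : 0 < a) (hb : 0 < b) (hc : 0 < c)
  (hPhi : forall x : R, 0 <= F12 a b c (- x ^ 2 / 4))
  (g d e : R) (hg0 : 0 <= g) (hga : g < a) (hd : 0 <= d) (he : 0 <= e)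
  (hnz : ~ (g = 0 /\ d = 0 /\ e = 0)) :
  P12 (a - g) (b + d) (c + e).
Proof.
  pose proof (admissible_F12_coef a b c ha hb hc hPhi) as Hadm.
  pose proof (admissible_poch_ratio _ (a - g) a Hadm ltac:(lra)) as Hadm_a.
  pose proof (admissible_poch_ratio _ b (b + d) Hadm_a ltac:(lra)) as Hadm_ab.
  assert (Hpos : forall z, z < 0 -> 0 < PSeries (fun k => F12_coef a b c k * poch_ratio (a - g) a k
                      * poch_ratio b (b + d) k * poch_ratio c (c + e) k) z).
  { apply (PSeries_poch_ratio_pos_of_pos _ c (c + e) Hadm_ab); [lra|].
    destruct (Req_dec e 0) as [He0|]; [right|left; lra].
    apply (PSeries_poch_ratio_pos_of_pos _ b (b + d) Hadm_a); [lra|].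
    destruct (Req_dec d 0) as [Hd0|]; [right|left; lra].
    apply (PSeries_poch_ratio_pos_of_pos _ (a - g) a Hadm); [lra|].
    left. destruct (Req_dec g 0); [|lra]. exfalso. tauto. }
  split; [lra|split; [lra|split; [lra|]]].
  intros x Hx. rewrite F12_poch_ratio by lra. apply Hpos.
  assert (0 < x ^ 2) by (apply pow_lt, Hx). lra.
Qed.
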